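(* Let $f:\mathbb{N}\to[0,\infty)$ be a decreasing function with $\sum_{n=1}^\infty f(n)=\infty$. (1) If $A\subseteq\mathbb{N}$ satisfies $\liminf_{N\to\infty}\frac1N\sum_{n=1}^N\mathbbm{1}(n\in A)>0$, then \[ \sum_{n\in A}f(n)=\infty \qquad\text{and}\qquad \liminf_{N\to\infty}\frac{\sum_{n=1}^N\mathbbm{1}(n\in A)f(n)}{\sum_{n=1}^Nf(n)}>0. \] (2) There exists a convex, strictly increasing function $a:\mathbb{N}\to\mathbb{N}$ with $\lim_{n\to\infty}(a(n)-a(n-1))=\infty$ such that $\sum_{n=1}^\infty f(a(n))=\infty$. *)

(* Stdlib reals + Coquelicot. Natural numbers N = {1,2,...} are modelled
   by nat, with all hypotheses/conclusions restricted to indices n >= 1. *)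
From Stdlib Require Import Reals.
From Coquelicot Require Import Coquelicot.
Open Scope R_scope.

Definition psum (u : nat -> R) (N : nat) : R := sum_n_m u 1 N.

Definition indic (A : nat -> bool) (g : nat -> R) (n : nat) : R :=
  if A n then g n else 0.

Definition diverges (u : nat -> R) : Prop := is_lim_seq (psum u) p_infty.

Definition decr_nonneg (f : nat -> R) : Prop :=
  (forall n, (1 <= n)%nat -> 0 <= f n) /\
  (forall m n, (1 <= m)%nat -> (m <= n)%nat -> f n <= f m).

(* (1) is summation by parts.  With [C(N)] the number of elements of [A] up to [N],
   [sum_{n<=N} 1_A(n) f(n) = C(N) f(N) + sum_{n<N} C(n) (f(n) - f(n+1))]; as [f] decreases,
   the density bound [C(n) >= d n] can be inserted termwise, which yields
   [sum_{n<=N} 1_A(n) f(n) >= K + d sum_{n<=N} f(n)] for some constant [K].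
   (2) [a] is built greedily: it advances by its current gap, and the gap grows by one
   each time the values [f(a(n))] collected since the last growth add up to 1, so that
   [sum_{n<=N} f(a(n)) >= gap(N) - 1].  The gap cannot stall, because the series of a
   decreasing [f] still diverges along an arithmetic progression of difference [D]:
   [D f(p + kD)] dominates the block of the [D] terms that follow [p + kD]. *)

From Stdlib Require Import Reals Lra Lia.
From Coquelicot Require Import Coquelicot.
Open Scope R_scope.

Lemma psum_0 (u : nat -> R) : psum u 0 = 0.
Proof. unfold psum. rewrite sum_n_m_zero; [reflexivity | lia]. Qed.

Lemma psum_S (u : nat -> R) (N : nat) : psum u (S N) = psum u N + u (S N).
Proof. unfold psum. rewrite sum_n_Sm; [reflexivity | lia]. Qed.

Lemma LimInf_seq_gt_0_eventually (u : nat -> R) :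
  Rbar_lt 0 (LimInf_seq u) -> exists d, 0 < d /\ eventually (fun n => d < u n).
Proof.
  unfold LimInf_seq. destruct (ex_LimInf_seq u) as [[l| |] Hl]; simpl in *; intros Hpos.
  - assert (Hl2 : 0 < l / 2) by lra.
    destruct (Hl (mkposreal _ Hl2)) as [_ [N HN]].
    exists (l / 2). split; [exact Hl2|]. exists N. intros n Hn.
    specialize (HN n Hn). simpl in HN. lra.
  - exists 1. split; [lra | apply Hl].
  - contradiction.
Qed.

Lemma LimInf_seq_gt_0_of_eventually (u : nat -> R) (d : R) :
  0 < d -> eventually (fun n => d <= u n) -> Rbar_lt 0 (LimInf_seq u).
Proof.
  intros Hd Hev. pose proof (LimInf_le _ _ Hev) as Hle.
  rewrite LimInf_seq_const in Hle.
  destruct (LimInf_seq u); simpl in *; lra || exact I.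
Qed.

Section LinearLowerBound.

Variables (F S : nat -> R) (K d : R).
Hypotheses (Hd : 0 < d) (HF : is_lim_seq F p_infty)
  (Hbound : eventually (fun N => K + d * F N <= S N)).

Lemma is_lim_seq_p_infty_of_linear_lower_bound : is_lim_seq S p_infty.
Proof.
  apply (is_lim_seq_le_p_loc (fun N => K + d * F N)); [exact Hbound|].
  apply is_lim_seq_spec. intros M.
  destruct (proj2 (is_lim_seq_spec _ _) HF ((M - K) / d)) as [N HN].
  exists N. intros n Hn. specialize (HN n Hn).
  apply (Rmult_lt_compat_l d) in HN; [|exact Hd].
  replace (d * ((M - K) / d)) with (M - K) in HN by (field; lra). lra.
Qed.

Lemma LimInf_ratio_gt_0_of_linear_lower_bound :
  Rbar_lt 0 (LimInf_seq (fun N => S N / F N)).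
Proof.
  apply (LimInf_seq_gt_0_of_eventually _ (d / 2)); [lra|].
  destruct (proj2 (is_lim_seq_spec _ _) HF (2 * Rabs K / d)) as [N1 HN1].
  destruct Hbound as [N2 HN2].
  exists (Nat.max N1 N2). intros n Hn.
  specialize (HN1 n ltac:(lia)). specialize (HN2 n ltac:(lia)).
  (* [d * F n > 2 |K|] makes [F n] positive and absorbs the constant [K]. *)
  apply (Rmult_lt_compat_l d) in HN1; [|exact Hd].
  replace (d * (2 * Rabs K / d)) with (2 * Rabs K) in HN1 by (field; lra).
  pose proof (Rabs_pos K). pose proof (Rle_abs (- K)). rewrite Rabs_Ropp in *.
  assert (HFn : 0 < F n) by nra.
  apply (Rle_div_r (d / 2) (S n) (F n)); [exact HFn | nra].
Qed.

End LinearLowerBound.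

Section AbelSummation.

Variables (f : nat -> R) (A : nat -> bool) (d : R) (N0 : nat).
Hypotheses (hf : decr_nonneg f) (HN0 : (1 <= N0)%nat)
  (Hdensity : forall N, (N0 <= N)%nat ->
     d * INR N <= psum (indic A (fun _ => 1)) N).

Definition abel_defect (N : nat) : R :=
  psum (indic A f) N - psum (indic A (fun _ => 1)) N * f N
  - d * (psum f N - INR N * f N).

Lemma abel_defect_S N :
  abel_defect (S N) - abel_defect N =
  (psum (indic A (fun _ => 1)) N - d * INR N) * (f N - f (S N)).
Proof. unfold abel_defect, indic. rewrite !psum_S, S_INR. destruct (A (S N)); ring. Qed.

Lemma abel_defect_mono N : (N0 <= N)%nat -> abel_defect N0 <= abel_defect N.
Proof.
  induction 1 as [|N HN IH]; [lra|].
  pose proof (abel_defect_S N) as Hstep.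
  pose proof (Hdensity N HN).
  pose proof (proj2 hf N (S N) ltac:(lia) ltac:(lia)).
  nra.
Qed.

Lemma psum_indic_ge_abel_defect N :
  (N0 <= N)%nat -> abel_defect N0 + d * psum f N <= psum (indic A f) N.
Proof.
  intros HN. pose proof (abel_defect_mono N HN) as Hmono.
  pose proof (Hdensity N HN). pose proof (proj1 hf N ltac:(lia)).
  unfold abel_defect in *. nra.
Qed.

End AbelSummation.

Lemma psum_indic_linear_lower_bound (f : nat -> R) (A : nat -> bool) :
  decr_nonneg f ->
  Rbar_lt 0 (LimInf_seq (fun N => psum (indic A (fun _ => 1)) N / INR N)) ->
  exists K d, 0 < d /\ eventually (fun N => K + d * psum f N <= psum (indic A f) N).
Proof.
  intros hf Hdens. destruct (LimInf_seq_gt_0_eventually _ Hdens) as [d [Hd [N1 HN1]]].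
  set (N0 := Nat.max N1 1).
  assert (Hdensity : forall N, (N0 <= N)%nat ->
            d * INR N <= psum (indic A (fun _ => 1)) N).
  { intros N HN. specialize (HN1 N ltac:(lia)).
    assert (0 < INR N) by (apply lt_0_INR; lia).
    apply Rlt_le. apply Rlt_div_r; lra. }
  exists (abel_defect f A d N0), d. split; [exact Hd|]. exists N0.
  apply psum_indic_ge_abel_defect; [exact hf | lia | exact Hdensity].
Qed.

Lemma psum_block_le (f : nat -> R) (q i : nat) :
  decr_nonneg f -> (1 <= q)%nat -> psum f (q + i) - psum f q <= INR i * f q.
Proof.
  intros hf Hq. induction i as [|i IH].
  - rewrite Nat.add_0_r. simpl. lra.
  - rewrite Nat.add_succ_r, psum_S, S_INR.
    pose proof (proj2 hf q (S (q + i)) Hq ltac:(lia)). lra.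
Qed.

Lemma psum_arith_prog_ge (f : nat -> R) (p D K : nat) :
  decr_nonneg f -> (1 <= p)%nat ->
  psum f (p + S K * D) - psum f (p + D) <= INR D * psum (fun k => f (p + k * D)%nat) K.
Proof.
  intros hf Hp. induction K as [|K IH].
  - rewrite psum_0. replace (p + 1 * D)%nat with (p + D)%nat by lia. lra.
  - rewrite psum_S, Rmult_plus_distr_l.
    pose proof (psum_block_le f (p + S K * D) D hf ltac:(lia)) as Hblock.
    replace (p + S K * D + D)%nat with (p + S (S K) * D)%nat in Hblock by lia.
    lra.
Qed.

Lemma diverges_arith_prog (f : nat -> R) (p D : nat) :
  decr_nonneg f -> diverges f -> (1 <= p)%nat -> (1 <= D)%nat ->
  diverges (fun k => f (p + k * D)%nat).
Proof.
  intros hf Hdiv Hp HD. assert (HDpos : 0 < INR D) by (apply lt_0_INR; lia).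
  apply (is_lim_seq_p_infty_of_linear_lower_bound
           (fun K => psum f (p + S K * D)) _ (- psum f (p + D) / INR D) (/ INR D)).
  - apply Rinv_0_lt_compat, HDpos.
  - apply (is_lim_seq_subseq (psum f)); [|exact Hdiv].
    apply eventually_subseq. intros n. nia.
  - exists O. intros K _. pose proof (psum_arith_prog_ge f p D K hf Hp).
    apply (Rmult_le_reg_l (INR D)); [exact HDpos|].
    field_simplify; lra.
Qed.

Record greedy_state := GreedyState { point : nat; gap : nat; credit : R }.

Definition greedy_step (f : nat -> R) (s : greedy_state) : greedy_state :=
  let p := (point s + gap s)%nat in
  if Rle_dec 1 (credit s + f p) then GreedyState p (S (gap s)) 0
  else GreedyState p (gap s) (credit s + f p).

Fixpoint greedy (f : nat -> R) (n : nat) : greedy_state :=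
  match n with
  | O => GreedyState 1 1 0
  | S n => greedy_step f (greedy f n)
  end.

Section Greedy.

Variable f : nat -> R.
Hypothesis hf : decr_nonneg f.

Lemma greedy_point_S n :
  point (greedy f (S n)) = (point (greedy f n) + gap (greedy f n))%nat.
Proof. simpl. unfold greedy_step. destruct Rle_dec; reflexivity. Qed.

Lemma greedy_step_cases n :
  let s := greedy f n in let s' := greedy f (S n) in
  (gap s' = gap s /\ credit s' = credit s + f (point s') /\ credit s' < 1) \/
  (gap s' = S (gap s) /\ credit s' = 0 /\ 1 <= credit s + f (point s')).
Proof.
  simpl. unfold greedy_step. destruct Rle_dec; simpl; [right | left]; repeat split; lra.
Qed.

Lemma greedy_gap_le m n : (m <= n)%nat -> (gap (greedy f m) <= gap (greedy f n))%nat.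
Proof. induction 1 as [|n _ IH]; [lia|]. destruct (greedy_step_cases n) as [[-> _]|[-> _]]; lia. Qed.

Lemma greedy_invariant n :
  (1 <= point (greedy f n))%nat /\ (1 <= gap (greedy f n))%nat /\
  0 <= credit (greedy f n) < 1 /\
  INR (gap (greedy f n)) - 1 + credit (greedy f n) <= psum (fun m => f (point (greedy f m))) n.
Proof.
  induction n as [|n (Hp & Hg & Hc & Hsum)].
  - simpl. rewrite psum_0. repeat split; lra || lia.
  - assert (Hp' : (1 <= point (greedy f (S n)))%nat) by (rewrite greedy_point_S; lia).
    pose proof (proj1 hf _ Hp').
    rewrite psum_S.
    destruct (greedy_step_cases n) as [(-> & -> & Hlt) | (-> & -> & Hge)];
      rewrite ?S_INR; repeat split; lia || lra.
Qed.

Lemma greedy_stalled n k :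
  gap (greedy f (n + k)) = gap (greedy f n) ->
  point (greedy f (n + k)) = (point (greedy f n) + k * gap (greedy f n))%nat /\
  credit (greedy f (n + k)) =
    credit (greedy f n) + psum (fun j => f (point (greedy f n) + j * gap (greedy f n))%nat) k.
Proof.
  induction k as [|k IH]; intros Hstall.
  - rewrite Nat.add_0_r, psum_0. split; [lia | lra].
  - rewrite Nat.add_succ_r in *.
    pose proof (greedy_gap_le n (n + k) ltac:(lia)).
    pose proof (greedy_gap_le (n + k) (S (n + k)) ltac:(lia)).
    destruct IH as [IHp IHc]; [lia|].
    rewrite psum_S, greedy_point_S.
    destruct (greedy_step_cases (n + k)) as [(Hg' & Hc' & _) | (Hg' & _)]; [|lia].
    rewrite greedy_point_S in Hc'.
    assert (Hpt : (point (greedy f (n + k)) + gap (greedy f (n + k)) =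
                   point (greedy f n) + S k * gap (greedy f n))%nat) by (rewrite IHp; nia).
    rewrite Hpt in *. split; [reflexivity | lra].
Qed.

Lemma greedy_gap_increases n : diverges f -> exists m, (gap (greedy f n) < gap (greedy f m))%nat.
Proof.
  intros Hdiv. destruct (greedy_invariant n) as (Hp & Hg & _).
  destruct (proj2 (is_lim_seq_spec _ _) (diverges_arith_prog f _ _ hf Hdiv Hp Hg) 1)
    as [k Hk].
  exists (n + k)%nat. pose proof (greedy_gap_le n (n + k) ltac:(lia)).
  destruct (Nat.eq_dec (gap (greedy f (n + k))) (gap (greedy f n))) as [Hstall|]; [|lia].
  destruct (greedy_stalled n k Hstall) as [_ Hc].
  specialize (Hk k (le_n k)).
  destruct (greedy_invariant n) as (_ & _ & Hcn & _).
  destruct (greedy_invariant (n + k)) as (_ & _ & Hcnk & _).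
  lra.
Qed.

Lemma greedy_gap_unbounded :
  diverges f -> forall D, exists m, (D <= gap (greedy f m))%nat.
Proof.
  intros Hdiv D. induction D as [|D [m Hm]]; [exists O; lia|].
  destruct (greedy_gap_increases m Hdiv) as [m' Hm']. exists m'. lia.
Qed.

Lemma greedy_gap_lim :
  diverges f -> is_lim_seq (fun n => INR (gap (greedy f n))) p_infty.
Proof.
  intros Hdiv. apply is_lim_seq_spec. intros M.
  destruct (proj2 (is_lim_seq_spec _ _) is_lim_seq_INR M) as [D HD].
  destruct (greedy_gap_unbounded Hdiv D) as [m Hm].
  exists m. intros n Hn. apply (Rlt_le_trans _ (INR D)); [apply HD; lia|].
  apply le_INR. pose proof (greedy_gap_le m n Hn). lia.
Qed.

Lemma greedy_point_diff n :
  INR (point (greedy f (S n))) - INR (point (greedy f n)) = INR (gap (greedy f n)).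
Proof. rewrite greedy_point_S, plus_INR. ring. Qed.

End Greedy.

Theorem lemma2p7 (f : nat -> R) (hf : decr_nonneg f) (hdiv : diverges f) :
  (forall A : nat -> bool,
     Rbar_lt (Finite 0)
       (LimInf_seq (fun N => psum (indic A (fun _ => 1)) N / INR N)) ->
     diverges (indic A f) /\
     Rbar_lt (Finite 0)
       (LimInf_seq (fun N => psum (indic A f) N / psum f N)))
  /\
  (exists a : nat -> nat,
     (forall n, (1 <= n)%nat -> (1 <= a n)%nat) /\
     (forall n, (1 <= n)%nat -> (a n < a (S n))%nat) /\
     (forall n, (2 <= n)%nat ->
        INR (a n) - INR (a (n - 1)%nat) <= INR (a (S n)) - INR (a n)) /\
     is_lim_seq (fun n => INR (a n) - INR (a (n - 1)%nat)) p_infty /\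
     diverges (fun n => f (a n))).
Proof.
  split.
  - intros A Hdens.
    destruct (psum_indic_linear_lower_bound f A hf Hdens) as (K & d & Hd & Hbound).
    split.
    + exact (is_lim_seq_p_infty_of_linear_lower_bound _ _ _ _ Hd hdiv Hbound).
    + exact (LimInf_ratio_gt_0_of_linear_lower_bound _ _ _ _ Hd hdiv Hbound).
  - exists (fun n => point (greedy f n)).
    pose proof (greedy_invariant f hf) as Hinv.
    repeat split.
    + intros n _. apply Hinv.
    + intros n _. rewrite greedy_point_S. pose proof (Hinv n). lia.
    + intros [|n] Hn; [lia|]. rewrite Nat.sub_succ, Nat.sub_0_r, !greedy_point_diff.
      apply le_INR, greedy_gap_le. lia.
    + apply is_lim_seq_incr_1, (is_lim_seq_ext (fun n => INR (gap (greedy f n)))).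
      * intros n. rewrite Nat.sub_succ, Nat.sub_0_r, greedy_point_diff. reflexivity.
      * exact (greedy_gap_lim f hf hdiv).
    + apply (is_lim_seq_p_infty_of_linear_lower_bound _ _ (-1) 1 Rlt_0_1
               (greedy_gap_lim f hf hdiv)).
      exists O. intros n _. pose proof (Hinv n). lra.
Qed.
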